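(* Let $\Gamma_0$ be a directed Eulerian multi-triangulation of a connected closed $2$-dimensional surface $M$ whose underlying graph is $3$-colorable, and fix a proper $3$-coloring of the underlying graph. Then: (1) if there is a directed walk of length $m$ in $\Gamma_0$ from a vertex $v$ to a vertex $w$, then $v$ and $w$ have the same color if and only if $m$ is divisible by $3$; (2) every closed directed walk in $\Gamma_0$ has length divisible by $3$.
   Context: Digraphs are finite, without loops, possibly with multiple directed edges. An Eulerian digraph is a connected digraph in which every vertex has equal indegree and outdegree. A directed Eulerian embedding is a $2$-cell embedding of an Eulerian digraph in a surface such that the boundary of each face is a directed closed walk (equivalently, incoming and outgoing edges alternate in the rotation around each vertex). A multi-triangulation of $M$ is a closed $2$-cell embedding (every face homeomorphic to a closed disk) of a connected finite graph (without loops, multiple edges allowed) in $M$ all of whose faces are triangles. A directed Eulerian multi-triangulation is a directed Eulerian embedding whose underlying graph is a multi-triangulation. The length of a walk is the number of edges traversed, counted with multiplicity. *)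

(* Combinatorial (flag / "generalized combinatorial map")
   model of a 2-cell embedding of a graph in a connected closed surface. *)
From mathcomp Require Import all_boot.
Set Implicit Arguments. Unset Strict Implicit. Unset Printing Implicit Defensive.

Section Maps.
Variables (D : finType) (a0 a1 a2 : D -> D).

(* D = flags (vertex, edge, face-side) of the embedding;
   a0 changes the vertex, a1 the edge, a2 the face, keeping the other two.
   Vertices = <a1,a2>-orbits, edges = <a0,a2>-orbits, faces = <a0,a1>-orbits. *)
Record surface_map : Prop := {
  sm_inv0 : involutive a0; sm_inv1 : involutive a1; sm_inv2 : involutive a2;
  sm_fpf0 : forall d, a0 d != d;
  sm_fpf1 : forall d, a1 d != d;
  sm_fpf2 : forall d, a2 d != d;
  sm_comm02 : forall d, a0 (a2 d) = a2 (a0 d);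
  sm_fpf02 : forall d, a0 (a2 d) != d;
  sm_conn : forall d d',
    connect (fun x y => [|| y == a0 x, y == a1 x | y == a2 x]) d d' }.

Definition same_vertex (d d' : D) : bool :=
  connect (fun x y => (y == a1 x) || (y == a2 x)) d d'.

Definition loopless : Prop := forall d, ~~ same_vertex d (a0 d).

(* every face is a triangle: its boundary walk has length 3 *)
Definition triangular_faces : Prop := forall d, iter 3 (fun x => a1 (a0 x)) d = d.

Definition multi_triangulation : Prop :=
  [/\ surface_map, loopless & triangular_faces].

(* orientation of edges: [out d] = the edge of flag d is directed away from
   the vertex of d.  Well defined on edges, and incoming/outgoing edges
   alternate in the rotation around each vertex. *)
Definition directed_eulerian (out : D -> bool) : Prop :=
  [/\ forall d, out (a0 d) = ~~ out d,
      forall d, out (a2 d) = out d &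
      forall d, out (a1 d) = ~~ out d].

Definition proper_3coloring (col : D -> 'I_3) : Prop :=
  [/\ forall d, col (a1 d) = col d,
      forall d, col (a2 d) = col d &
      forall d, col (a0 d) != col d].

(* [is_dwalk out v s w]: the sequence of flags s (one flag per traversed
   edge, taken at its tail) is a directed walk from the vertex of v to the
   vertex of w; its length is [size s]. *)
Fixpoint is_dwalk (out : D -> bool) (v : D) (s : seq D) (w : D) : bool :=
  match s with
  | [::] => same_vertex v w
  | d :: s' => [&& same_vertex v d, out d & is_dwalk out (a0 d) s' w]
  end.

End Maps.

From mathcomp Require Import all_boot ssralg finalg zmodp.

Set Implicit Arguments.
Unset Strict Implicit.
Unset Printing Implicit Defensive.

(* Read colors in Z/3 and let [color_step d] be the color difference along
   the edge of the flag d, from the vertex of d to the other end.  It is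
   nonzero, changes sign under a0, and is constant along the boundary of a
   triangle, since three nonzero elements of Z/3 with sum 0 are equal.  Hence
   the color gain [arc_step] from tail to head of the directed edge of d is
   invariant under a0, a2 and, because every face is a directed triangle,
   under a1.  By connectedness it is a global nonzero constant g, so a directed
   walk of length m changes the color by m g, which vanishes iff 3 divides m. *)

Import GRing.Theory.

Lemma connect_fun_eq (T : finType) (e : rel T) (aT : eqType) (f : T -> aT) :
  (forall x y, e x y -> f x = f y) -> forall x y, connect e x y -> f x = f y.
Proof.
move=> fe x y /connectP [p]; elim: p x => [|z p IHp] x /=; first by move=> _ ->.
by case/andP=> /fe -> pz /(IHp z pz).
Qed.

Section ColorSteps.

Local Open Scope ring_scope.

Lemma Fp_mulrn_eq0 p (x : 'F_p) m :
  prime p -> x != 0 -> (x *+ m == 0) = (p %| m)%N.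
Proof.
move=> p_pr x_neq0; rewrite -mulr_natr mulf_eq0 (negPf x_neq0) /=.
by rewrite (dvdn_pcharf (pchar_Fp p_pr)).
Qed.

Lemma Z3_nonzero_sum3_eq (x y z : 'I_3) :
  x != 0 -> y != 0 -> z != 0 -> x + y + z = 0 -> x = y.
Proof.
by move: x y z; do 3!case=> -[|[|[|//]]] ?; move=> //= *; apply: val_inj.
Qed.

Variables (D : finType) (a0 a1 a2 : D -> D) (out : D -> bool) (col : D -> 'I_3).

Hypothesis a0K : involutive a0.
Hypothesis a02C : forall d, a0 (a2 d) = a2 (a0 d).
Hypothesis triD : triangular_faces a0 a1.
Hypothesis outE : directed_eulerian a0 a1 a2 out.
Hypothesis colP : proper_3coloring a0 a1 a2 col.
Hypothesis connD :
  forall d d', connect (fun x y => [|| y == a0 x, y == a1 x | y == a2 x]) d d'.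

Definition color_step d : 'I_3 := col (a0 d) - col d.

Definition arc_step d : 'I_3 := if out d then color_step d else color_step (a0 d).

Lemma color_step_neq0 d : color_step d != 0.
Proof. by case: colP => _ _ col0; rewrite subr_eq0 col0. Qed.

Lemma color_step_a0 d : color_step (a0 d) = - color_step d.
Proof. by rewrite /color_step a0K opprB. Qed.

Lemma color_step_a2 d : color_step (a2 d) = color_step d.
Proof. by case: colP => _ col2 _; rewrite /color_step a02C !col2. Qed.

Lemma color_step_face d : color_step (a1 (a0 d)) = color_step d.
Proof.
case: colP => col1 _ _; set f := fun x => a1 (a0 x).
have col_f x : col (f x) = col (a0 x) by rewrite /f col1.
have face_sum : color_step d + color_step (f d) + color_step (f (f d)) = 0.
  have col_back : col (a0 (f (f d))) = col d.
    by rewrite -col1; have /= -> := triD d.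
  by rewrite /color_step !col_f col_back [_ - col d + _]addrC !subrKA subrr.
by apply/esym; apply: (Z3_nonzero_sum3_eq _ _ _ face_sum); apply: color_step_neq0.
Qed.

Lemma arc_step_a0 d : arc_step (a0 d) = arc_step d.
Proof. by case: outE => out0 _ _; rewrite /arc_step out0 a0K; case: (out d). Qed.

Lemma arc_step_a2 d : arc_step (a2 d) = arc_step d.
Proof. by case: outE => _ out2 _; rewrite /arc_step out2 a02C !color_step_a2. Qed.

Lemma arc_step_a1 d : arc_step (a1 d) = arc_step d.
Proof.
case: outE => out0 _ out1.
have arc_step_face e : arc_step (a1 (a0 e)) = arc_step e.
  rewrite /arc_step out1 out0 negbK color_step_face.
  by case: (out e); rewrite // !color_step_a0 color_step_face.
by rewrite -{1}(a0K d) arc_step_face arc_step_a0.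
Qed.

Lemma arc_step_const d d' : arc_step d' = arc_step d.
Proof.
apply/esym/(connect_fun_eq _ (connD d d')) => x y.
by case/or3P=> /eqP ->; rewrite ?arc_step_a0 ?arc_step_a1 ?arc_step_a2.
Qed.

Lemma arc_step_neq0 d : arc_step d != 0.
Proof. by rewrite /arc_step; case: (out d); apply: color_step_neq0. Qed.

Lemma col_same_vertex d d' : same_vertex a1 a2 d d' -> col d = col d'.
Proof.
case: colP => col1 col2 _; apply: connect_fun_eq => x y.
by case/orP=> /eqP ->.
Qed.

Lemma col_dwalk v s w :
  is_dwalk a0 a1 a2 out v s w -> col w = col v + arc_step v *+ size s.
Proof.
elim: s v => [|d s IHs] v /=; first by move/col_same_vertex->; rewrite addr0.
case/and3P=> /col_same_vertex col_vd out_d /IHs ->.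
rewrite (arc_step_const v (a0 d)) mulrS addrA (arc_step_const d v); congr (_ + _).
by rewrite /arc_step out_d /color_step col_vd addrC subrK.
Qed.

Lemma eq_col_dwalk v w s :
  is_dwalk a0 a1 a2 out v s w -> (col v == col w) = (3 %| size s)%N.
Proof.
move/col_dwalk->; rewrite eq_sym -subr_eq0 addrC addKr.
exact: (@Fp_mulrn_eq0 3 _ _ isT (arc_step_neq0 v)).
Qed.

End ColorSteps.

Theorem lemma1 (D : finType) (a0 a1 a2 : D -> D) (out : D -> bool)
  (col : D -> 'I_3) :
  multi_triangulation a0 a1 a2 ->
  directed_eulerian a0 a1 a2 out ->
  proper_3coloring a0 a1 a2 col ->
  (forall (v w : D) (s : seq D), is_dwalk a0 a1 a2 out v s w ->
      (col v == col w) = (3 %| size s)) /\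
  (forall (v : D) (s : seq D), is_dwalk a0 a1 a2 out v s v -> 3 %| size s).
Proof.
move=> [[a0K _ _ _ _ _ a02C _ connD] _ triD] outE colP.
have col_walk := eq_col_dwalk a0K a02C triD outE colP connD.
by split=> // v s /col_walk <-.
Qed.
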